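(* For every positive integer $L$, $$\{(\mathbf{X},\mathbf{Y}) \in \mathbb{S}^L_{+}\times\mathbb{S}^L : -\mathbf{X}\preceq\mathbf{Y}\preceq\mathbf{X}\} = \operatorname{cl}\{(\mathbf{X},\mathbf{Y})\in\mathbb{S}^L_{++}\times\mathbb{S}^L : \mathbf{X}-\mathbf{Y}\mathbf{X}^{-1}\mathbf{Y}\succ 0\}.$$
   Context: $\mathbb{S}^L$, $\mathbb{S}^L_+$, $\mathbb{S}^L_{++}$ denote the real symmetric, positive semidefinite and positive definite $L\times L$ matrices; $\preceq$ and $\succ$ refer to the Loewner order; $\operatorname{cl}$ denotes closure. *)

From HB Require Import structures.
From mathcomp Require Import all_boot all_order all_algebra.
From mathcomp Require Import all_classical all_reals all_analysis.
Set Implicit Arguments. Unset Strict Implicit. Unset Printing Implicit Defensive.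
Import Order.TTheory GRing.Theory Num.Theory.
Local Open Scope ring_scope.

Definition symmx (R : realType) (L : nat) (A : 'M[R]_L) : Prop := A^T = A.

Definition psdmx (R : realType) (L : nat) (A : 'M[R]_L) : Prop :=
  symmx A /\ forall v : 'cV[R]_L, 0 <= (v^T *m A *m v) 0 0.

Definition pdmx (R : realType) (L : nat) (A : 'M[R]_L) : Prop :=
  symmx A /\ forall v : 'cV[R]_L, v != 0 -> 0 < (v^T *m A *m v) 0 0.

Definition loewner_le (R : realType) (L : nat) (A B : 'M[R]_L) : Prop :=
  psdmx (B - A).

From HB Require Import structures.
From mathcomp Require Import all_boot all_order all_algebra.
From mathcomp Require Import all_classical all_reals all_analysis.
From mathcomp Require Import ring lra.
Import Order.TTheory GRing.Theory Num.Theory.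
Import numFieldTopology.Exports.
Local Open Scope classical_set_scope.
Local Open Scope ring_scope.
Set Implicit Arguments. Unset Strict Implicit. Unset Printing Implicit Defensive.

(* For symmetric X, Y with X invertible put S(X, Y) = X - Y X^-1 Y (the Schur
   complement of the block matrix [[X, Y], [Y, X]]).  Everything rests on three polynomial
   identities in the quadratic form qf M u w = u^T M w: with w = X^-1 Y v,
     X(v + w) + S(v) = 2 (X + Y)(v),   X(v - w) + S(v) = 2 (X - Y)(v),
     (X + Y)(v - w) + (X - Y)(v + w) = 2 S(v)          ([schur_identities]).
   The first two show that X > 0 and S > 0 force -X <= Y <= X; the third
   shows that X + Y > 0 and X - Y > 0 force S > 0 (v - w and v + w cannot
   both vanish when v != 0).  Topologically, the Loewner interval is closed (PSD matrices
   form a closed set, an intersection of half-spaces), which gives one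
   inclusion; for the other, (X + t I, Y) lies in the strict region for every
   t > 0 and tends to (X, Y) as t -> 0+. *)

Section QuadraticForm.
Variables (R : comNzRingType) (n : nat).
Implicit Types (M N : 'M[R]_n) (u w : 'cV[R]_n).

Definition qf M u w : R := (u^T *m M *m w) 0 0.

Lemma qfDm M N u w : qf (M + N) u w = qf M u w + qf N u w.
Proof. by rewrite /qf mulmxDr mulmxDl mxE. Qed.

Lemma qfBm M N u w : qf (M - N) u w = qf M u w - qf N u w.
Proof. by rewrite /qf mulmxBr mulmxBl !mxE. Qed.

Lemma qfZm a M u w : qf (a *: M) u w = a * qf M u w.
Proof. by rewrite /qf -scalemxAr -scalemxAl mxE. Qed.

Lemma qfDl M u1 u2 w : qf M (u1 + u2) w = qf M u1 w + qf M u2 w.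
Proof. by rewrite /qf linearD /= !mulmxDl mxE. Qed.

Lemma qfNl M u w : qf M (- u) w = - qf M u w.
Proof. by rewrite /qf linearN /= !mulNmx mxE. Qed.

Lemma qfDr M u w1 w2 : qf M u (w1 + w2) = qf M u w1 + qf M u w2.
Proof. by rewrite /qf mulmxDr mxE. Qed.

Lemma qfNr M u w : qf M u (- w) = - qf M u w.
Proof. by rewrite /qf mulmxN mxE. Qed.

Lemma qf_mulr M N u w : qf M u (N *m w) = qf (M *m N) u w.
Proof. by rewrite /qf !mulmxA. Qed.

Lemma qf_sym M u w : M^T = M -> qf M u w = qf M w u.
Proof.
move=> sM; rewrite /qf -[in RHS]sM.
transitivity ((w^T *m M^T *m u)^T 0 0); first by rewrite !trmx_mul !trmxK mulmxA.
by rewrite mxE.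
Qed.

Lemma qf_expandD M u w : M^T = M ->
  qf M (u + w) (u + w) = qf M u u + 2 * qf M u w + qf M w w.
Proof. by move=> sM; rewrite !(qfDl, qfDr) (qf_sym w u sM); ring. Qed.

Lemma qf_expandB M u w : M^T = M ->
  qf M (u - w) (u - w) = qf M u u - 2 * qf M u w + qf M w w.
Proof. by move=> sM; rewrite !(qfDl, qfDr, qfNl, qfNr) (qf_sym w u sM); ring. Qed.
End QuadraticForm.

Definition schur (R : comUnitRingType) (n : nat) (A B : 'M[R]_n) : 'M[R]_n :=
  A - B *m invmx A *m B.

Section SchurIdentities.
Variables (R : fieldType) (n : nat) (A B : 'M[R]_n).
Hypotheses (sA : A^T = A) (sB : B^T = B) (uA : A \in unitmx).

Lemma schur_identities (v : 'cV[R]_n) (w := invmx A *m B *m v) :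
  [/\ qf A (v + w) (v + w) + qf (schur A B) v v = 2 * qf (A + B) v v,
      qf A (v - w) (v - w) + qf (schur A B) v v = 2 * qf (A - B) v v &
      qf (A + B) (v - w) (v - w) + qf (A - B) (v + w) (v + w)
        = 2 * qf (schur A B) v v].
Proof.
have Aw_B u : qf A u w = qf B u v by rewrite /w qf_mulr mulmxA mulmxV // mul1mx.
have Svv : qf (schur A B) v v = qf A v v - qf B v w.
  by rewrite /schur qfBm /w qf_mulr !mulmxA.
have Aww : qf A w w = qf B v w by rewrite Aw_B qf_sym.
rewrite Svv !(qfBm, qfDm) !(qf_expandB, qf_expandD) // Aw_B Aww.
by split; ring.
Qed.
End SchurIdentities.

Lemma qf1_gt0 (R : realDomainType) (n : nat) (u : 'cV[R]_n) :
  u != 0 -> 0 < qf 1%:M u u.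
Proof.
move=> nz_u; rewrite /qf mulmx1 mxE.
have [i ui] : exists i, u i 0 != 0.
  apply/existsP; apply: contraR nz_u; rewrite negb_exists => /forallP u0.
  by apply/eqP/matrixP => i j; rewrite mxE (ord1 j); exact/eqP/negbNE/u0.
rewrite (bigD1 i) //= ltr_wpDr //.
  by apply: sumr_ge0 => j _; rewrite mxE -expr2 sqr_ge0.
by rewrite mxE -expr2 exprn_even_gt0.
Qed.

Section Definite.
Variables (R : realType) (n : nat).
Implicit Types (A B M : 'M[R]_n).

Lemma symmxD A B : symmx A -> symmx B -> symmx (A + B).
Proof. by move=> sA sB; rewrite /symmx linearD /= sA sB. Qed.

Lemma symmxB A B : symmx A -> symmx B -> symmx (A - B).
Proof. by move=> sA sB; rewrite /symmx linearB /= sA sB. Qed.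

Lemma symmx_schur A B : symmx A -> symmx B -> symmx (schur A B).
Proof.
move=> sA sB; apply: symmxB => //.
by rewrite /symmx !trmx_mul trmx_inv sA sB mulmxA.
Qed.

Lemma pdmx_psdmx M : pdmx M -> psdmx M.
Proof.
move=> [sM pM]; split => // v; have [->|nz_v] := eqVneq v 0; last exact/ltW/pM.
by rewrite trmx0 !mul0mx mxE.
Qed.

Lemma pdmx_unit M : pdmx M -> M \in unitmx.
Proof.
move=> [_ pM]; rewrite unitmxE unitfE; apply/negP => /det0P [v nz_v vM].
by have := pM v^T; rewrite trmx_eq0 trmxK vM mul0mx mxE ltxx => /(_ nz_v).
Qed.

Lemma psdmx_add_scalar M t : psdmx M -> 0 < t -> pdmx (M + t%:M).
Proof.
move=> [sM pM] t_gt0; split; first by rewrite /symmx linearD /= tr_scalar_mx sM.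
move=> v nz_v; change (0 < qf (M + t%:M) v v).
have Mv : 0 <= qf M v v := pM v; have := qf1_gt0 nz_v.
rewrite -[t%:M]scalemx1 qfDm qfZm; nra.
Qed.

(* If A is positive definite and so is its Schur complement, then
   -A <= B <= A; each half is a sum of two squares by [schur_identities]. *)
Lemma schur_pd_loewner A B :
  pdmx A -> symmx B -> pdmx (schur A B) -> psdmx (A + B) /\ psdmx (A - B).
Proof.
move=> pdA sB pdS; have [sA _] := pdA; have uA := pdmx_unit pdA.
have [_ psdA] := pdmx_psdmx pdA; have [_ psdS] := pdmx_psdmx pdS.
have Sv v : 0 <= qf (schur A B) v v := psdS v.
split; split; [exact: symmxD | | exact: symmxB | ] => v;
  have [eD eB _] := schur_identities sA sB uA v.
- change (0 <= qf (A + B) v v).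
  by have : 0 <= qf A _ _ := psdA (v + invmx A *m B *m v); have := Sv v; lra.
- change (0 <= qf (A - B) v v).
  by have : 0 <= qf A _ _ := psdA (v - invmx A *m B *m v); have := Sv v; lra.
Qed.

(* Conversely, if A + B and A - B are positive definite then so are A
   (their half-sum) and the Schur complement of A and B. *)
Lemma loewner_pd_schur A B : symmx A -> symmx B ->
  pdmx (A + B) -> pdmx (A - B) -> pdmx A /\ pdmx (schur A B).
Proof.
move=> sA sB pdAB pdAmB.
have pdA : pdmx A.
  split => // v nz_v; change (0 < qf A v v).
  have : 0 < qf (A + B) v v := pdAB.2 v nz_v.
  have : 0 < qf (A - B) v v := pdAmB.2 v nz_v.
  by rewrite qfBm qfDm; lra.
split => //; split; first exact: symmx_schur.
move=> v nz_v; change (0 < qf (schur A B) v v).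
have [_ _ eS] := schur_identities sA sB (pdmx_unit pdA) v.
set w := invmx A *m B *m v in eS *.
have ge0D : 0 <= qf (A + B) (v - w) (v - w) := (pdmx_psdmx pdAB).2 _.
have ge0B : 0 <= qf (A - B) (v + w) (v + w) := (pdmx_psdmx pdAmB).2 _.
have [/eqP|vw_nz] := eqVneq (v - w) 0; last first.
  by have : 0 < qf (A + B) _ _ := pdAB.2 _ vw_nz; lra.
rewrite subr_eq0 => /eqP vw.
have vw_nz : v + w != 0.
  by rewrite -vw -mulr2n -scaler_nat scaler_eq0 pnatr_eq0 negb_or.
by have : 0 < qf (A - B) _ _ := pdAmB.2 _ vw_nz; lra.
Qed.
End Definite.

Lemma cvg_closure {T : Type} {U : topologicalType} (F : set_system T)
    {FF : ProperFilter F} (f : T -> U) (A : set U) (x : U) :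
  (\forall t \near F, A (f t)) -> f @ F --> x -> closure A x.
Proof.
move=> FA fx B /fx /= FB.
by have [t [At Bt]] := filter_ex (filterI FA FB); exists (f t).
Qed.

Section Topology.
Variables (R : realType) (n : nat).

(* qf M u w is a finite sum of entries of M times constants. *)
Lemma qf_continuous (u w : 'cV[R]_n) : continuous (fun M : 'M[R]_n => qf M u w).
Proof.
have qfE M : qf M u w = \sum_i \sum_j u i 0 * M i j * w j 0.
  rewrite /qf mxE; under eq_bigr do rewrite mxE big_distrl /=.
  by rewrite exchange_big; apply: eq_bigr => i _; apply: eq_bigr => j _; rewrite !mxE.
rewrite (funext qfE).
apply: continuous_big => [|i _]; first exact: add_continuous.
apply: continuous_big => [|j _]; first exact: add_continuous.
move=> M.
apply: (@continuousM _ _ (fun N : 'M[R]_n => u i 0 * N i j) (fun=> w j 0)).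
  apply: (@continuousM _ _ (fun=> u i 0) (fun N : 'M[R]_n => N i j)).
    exact: cst_continuous.
  exact: coord_continuous.
exact: cst_continuous.
Qed.

(* Symmetry is a family of linear equations between entries. *)
Lemma closed_symmx : closed [set M : 'M[R]_n | symmx M].
Proof.
have -> : [set M : 'M[R]_n | symmx M] =
    \bigcap_(ij in setT) [set M | M ij.2 ij.1 - M ij.1 ij.2 = 0].
  apply/seteqP; split => [M sM [i j] _ | M sM] /=.
    by rewrite -{1}sM mxE subrr.
  apply/matrixP => i j; rewrite mxE; apply/eqP; rewrite -subr_eq0.
  by apply/eqP; exact: (sM (i, j) I).
apply: closed_bigI => -[i j] _.
apply: (@preimage_closed _ _ (fun M : 'M[R]_n => M j i - M i j) [set x | x = 0]);
  last exact: closed_eq.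
by move=> M _; apply: continuousB; exact: coord_continuous.
Qed.

(* The PSD cone is an intersection of closed half-spaces {M | 0 <= qf M v v}. *)
Lemma closed_psdmx : closed [set M : 'M[R]_n | psdmx M].
Proof.
have -> : [set M : 'M[R]_n | psdmx M] = [set M | symmx M] `&`
    \bigcap_(v in setT) (fun M : 'M[R]_n => qf M v v) @^-1` [set x | 0 <= x].
  apply/seteqP; split => M [sM pM]; split => //.
    by move=> v _; exact: pM.
  by move=> v; exact: (pM v I).
apply: (closedI closed_symmx).
apply: closed_bigI => v _; apply: preimage_closed; last exact: closed_ge.
by move=> M _; exact: qf_continuous.
Qed.
End Topology.

Section LoewnerInterval.
Variables (R : realType) (n : nat).

Definition loewner_interval : set ('M[R]_n * 'M[R]_n) :=
  [set p | psdmx p.1 /\ symmx p.2 /\ loewner_le (- p.1) p.2 /\ loewner_le p.2 p.1].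

Definition schur_pd_set : set ('M[R]_n * 'M[R]_n) :=
  [set p | pdmx p.1 /\ symmx p.2 /\ pdmx (schur p.1 p.2)].

Lemma closed_loewner_interval : closed loewner_interval.
Proof.
have cfst : continuous (fun p : 'M[R]_n * 'M[R]_n => p.1) by move=> p; exact: cvg_fst.
have csnd : continuous (fun p : 'M[R]_n * 'M[R]_n => p.2) by move=> p; exact: cvg_snd.
have cdiff (f g : 'M[R]_n * 'M[R]_n -> 'M[R]_n) :
    continuous f -> continuous g -> continuous (fun p => f p - g p).
  by move=> cf cg p; exact: (continuousB (cf p) (cg p)).
have cNfst : continuous (fun p : 'M[R]_n * 'M[R]_n => - p.1).
  by move=> p; exact: (continuousN (cfst p)).
have closed_pre (f : 'M[R]_n * 'M[R]_n -> 'M[R]_n) (P : set 'M[R]_n) :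
    continuous f -> closed P -> closed (f @^-1` P).
  by move=> cf cP; apply: preimage_closed => // p _; exact: cf.
apply: closedI; first exact: (closed_pre _ _ cfst (@closed_psdmx R n)).
apply: closedI; first exact: (closed_pre _ _ csnd (@closed_symmx R n)).
apply: closedI; first exact: (closed_pre _ _ (cdiff _ _ csnd cNfst) (@closed_psdmx R n)).
exact: (closed_pre _ _ (cdiff _ _ cfst csnd) (@closed_psdmx R n)).
Qed.

Lemma schur_pd_set_sub : schur_pd_set `<=` loewner_interval.
Proof.
move=> [X Y] /= [pdX [sY pdS]]; have [psdXY psdXmY] := schur_pd_loewner pdX sY pdS.
split; first exact: pdmx_psdmx.
by split; last split; rewrite // /loewner_le opprK addrC.
Qed.

(* Every point of the interval is the limit of (X + t I, Y), t -> 0+, and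
   these points lie in the strict region by [loewner_pd_schur]. *)
Lemma loewner_interval_sub_closure : loewner_interval `<=` closure schur_pd_set.
Proof.
move=> [X Y] /= [psdX [sY [psdXY psdXmY]]].
rewrite /loewner_le opprK addrC in psdXY.
pose f t : 'M[R]_n * 'M[R]_n := (X + t *: 1%:M, Y).
apply: (@cvg_closure _ _ (0 : R)^'+ _ f).
  near=> t.
  have t_gt0 : 0 < t by near: t; exact: nbhs_right_gt.
  have [pdX pdS] : pdmx (X + t%:M) /\ pdmx (schur (X + t%:M) Y).
    apply: loewner_pd_schur => //; first exact: (psdmx_add_scalar psdX t_gt0).1.
      by rewrite addrAC; exact: psdmx_add_scalar.
    by rewrite addrAC; exact: psdmx_add_scalar.
  by rewrite /f scalemx1.
have -> : (X, Y) = f 0 by rewrite /f scale0r addr0.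
apply: cvg_at_right_filter.
apply: (cvg_pair (G := nbhs (X + 0 *: 1%:M)) (H := nbhs Y)); last exact: cvg_cst.
apply: cvgD; first exact: cvg_cst.
by apply: cvgZr_tmp; exact: cvg_id.
Unshelve. all: by end_near.
Qed.
End LoewnerInterval.

Theorem lemma2 (R : realType) (L : nat) (hL : (0 < L)%N) :
  [set p : 'M[R]_L * 'M[R]_L |
     psdmx p.1 /\ symmx p.2 /\ loewner_le (- p.1) p.2 /\ loewner_le p.2 p.1]
  = closure [set p : 'M[R]_L * 'M[R]_L |
     pdmx p.1 /\ symmx p.2 /\ pdmx (p.1 - p.2 *m invmx p.1 *m p.2)].
Proof.
apply/seteqP; split; first exact: loewner_interval_sub_closure.
rewrite [X in _ `<=` X](closure_id _).1; last exact: closed_loewner_interval.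
exact/closureS/schur_pd_set_sub.
Qed.
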